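(* Let $C$ be a cycle on vertices $0,1,\dots,n-1$ (in clockwise order), let $\mathcal H$ be a family of at least three pairwise distinct runs of $C$ that is strict-containment free, and let $\mathcal K$ be a family of vertex subsets of $C$ such that $(C,\mathcal H)$ and $(C,\mathcal K)$ are $axax$-free. Let $C(\mathcal H)$ be the cycle on $\mathcal H$ in lex. cyclic order. Then there is an outerplanar graph $Q$ on vertex set $\mathcal H$ that contains $C(\mathcal H)$, has an outerplanar embedding whose outer face is bounded by $C(\mathcal H)$, and such that for every $K\in\mathcal K$ the set $\{H\in\mathcal H: H\cap K\ne\emptyset\}$ induces a connected subgraph of $Q$.
   Context: Indices are taken mod $n$. A run is a vertex set of the form $\mathrm{arc}[i,j]=\{i,i+1,\dots,j\}$ (consecutive vertices in clockwise order) that is a nonempty proper subset of $V(C)$; for such a run $R$ write $s(R)=i$, $t(R)=j$. A run $R$ is strictly contained in a run $R'$ if $R\subseteq R'$ and, traversing $C$ clockwise starting from $s(R')$, one meets $s(R')$ strictly before $s(R)$ and $t(R)$ strictly before $t(R')$ (i.e. $R'$ extends beyond $R$ at both ends). A family of runs is strict-containment free if no member is strictly contained in another. Lex. cyclic order: traverse $C$ clockwise from some fixed starting vertex; on visiting a vertex $v$, list all $R\in\mathcal H$ with $s(R)=v$, ordered by increasing clockwise distance from $v$ to $t(R)$ (ties broken arbitrarily); $C(\mathcal H)$ is the cycle through the members of $\mathcal H$ in this order. ''Vertices $p_1,\dots,p_4$ in cyclic order'' means four distinct vertices met in this order when traversing $C$. A pair $H,H'$ of a family is an $axax$-pair if there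 are vertices $a_1,x_1,a_2,x_2$ in cyclic order with $a_1,a_2\in H\setminus H'$ and $x_1,x_2\in H'$; a family is $axax$-free if it has no $axax$-pair. *)

(* Cycle C on vertices 'I_n = {0,...,n-1}, clockwise = increasing mod n. *)
From mathcomp Require Import all_boot.
Set Implicit Arguments. Unset Strict Implicit. Unset Printing Implicit Defensive.

Section Defs.
Variable n : nat.

Definition cdist (i j : 'I_n) : nat := (j + n - i) %% n.

Definition arc (i j : 'I_n) : {set 'I_n} := [set k | cdist i k <= cdist i j].

Definition run_st (R : {set 'I_n}) (i j : 'I_n) : Prop :=
  R = arc i j /\ R != set0 /\ R != setT.

Definition is_run (R : {set 'I_n}) : Prop := exists i j, run_st R i j.

Definition strictly_contained (R R' : {set 'I_n}) : Prop :=
  exists i j i' j', run_st R i j /\ run_st R' i' j' /\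
    R \subset R' /\ 0 < cdist i' i /\ cdist i' j < cdist i' j'.

Definition sc_free (F : {set {set 'I_n}}) : Prop :=
  forall R R', R \in F -> R' \in F -> ~ strictly_contained R R'.

Definition cyc4 (p1 p2 p3 p4 : 'I_n) : bool :=
  [&& 0 < cdist p1 p2, cdist p1 p2 < cdist p1 p3 & cdist p1 p3 < cdist p1 p4].

Definition axax_pair (F G : {set 'I_n}) : Prop :=
  exists a1 x1 a2 x2, cyc4 a1 x1 a2 x2 /\ a1 \in F :\: G /\ a2 \in F :\: G /\
    x1 \in G /\ x2 \in G.

Definition axax_free (Fam : {set {set 'I_n}}) : Prop :=
  forall F G, F \in Fam -> G \in Fam -> ~ axax_pair F G.

(* R comes no later than R' in lex. cyclic order started at vertex v0
   (ties between runs with equal keys broken arbitrarily) *)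
Definition lex_le (v0 : 'I_n) (R R' : {set 'I_n}) : Prop :=
  exists i j i' j', run_st R i j /\ run_st R' i' j' /\
    (cdist v0 i < cdist v0 i' \/ (cdist v0 i = cdist v0 i' /\ cdist i j <= cdist i' j')).

(* hs lists the members of H (each once) in lex. cyclic order from v0;
   C(H) is the cycle hs_0 hs_1 ... hs_(m-1) hs_0 *)
Definition lex_cyclic_enum (H : {set {set 'I_n}}) (v0 : 'I_n) (hs : seq {set 'I_n}) : Prop :=
  uniq hs /\ (forall R, R \in hs = (R \in H)) /\
  (forall a b, a < b < size hs -> lex_le v0 (nth set0 hs a) (nth set0 hs b)).

Definition graph_on (H : {set {set 'I_n}}) (Q : rel {set 'I_n}) : Prop :=
  (forall x y, Q x y -> Q y x) /\ (forall x, ~~ Q x x) /\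
  (forall x y, Q x y -> x \in H /\ y \in H).

Definition contains_cycle (Q : rel {set 'I_n}) (hs : seq {set 'I_n}) : Prop :=
  forall a, a < size hs -> Q (nth set0 hs a) (nth set0 hs (a.+1 %% size hs)).

(* Outerplanar embedding with outer face bounded by the Hamiltonian cycle hs:
   combinatorially, no two edges of Q cross w.r.t. the cyclic order of hs. *)
Definition outerplanar_wrt (Q : rel {set 'I_n}) (hs : seq {set 'I_n}) : Prop :=
  forall a b c d, a < b -> b < c -> c < d -> d < size hs ->
    ~ (Q (nth set0 hs a) (nth set0 hs c) /\ Q (nth set0 hs b) (nth set0 hs d)).

Definition induces_connected (Q : rel {set 'I_n}) (S : {set {set 'I_n}}) : Prop :=
  forall x y, x \in S -> y \in S ->
    connect [rel u v | [&& Q u v, u \in S & v \in S]] x y.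

End Defs.

(* Unroll C at v0: with l := cdist v0, a run arc[i,j] becomes the integer window
   [l i, l i + cdist i j], together with its translate by n.  Strict-containment freeness
   makes both ends of these windows monotone along the lex. cyclic order.  So if
   H_1 < H_2 < H_3 < H_4 in that order, X in K meets H_1 and H_3, and Y in K meets H_2 and
   H_4 but neither H_1 nor H_3, then witnesses of these meetings alternate around C and X, Y
   form an axax-pair; the rotated pattern is handled by moving the window of H_1 up by n.
   Hence no two traces {i | H_i meets X} of members of K alternate on the index cycle
   0, ..., m-1 (only this, not the axax-freeness of H, is used).  For such a family an
   outerplanar graph bounded by the index cycle in which every trace is connected is built
   by induction: with p0 < p1 < p2 the three smallest vertices, add the chord p1 v if some
   trace contains p1 and a vertex v > p2, and the chord p0 p2 otherwise.  No trace crosses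
   the chord without containing one of its ends, so the graphs built recursively on the
   two sides of the chord glue together. *)

From mathcomp Require Import all_boot zify.
(* Imported after MathComp so that [arc] is the run of [Defs], not [path.arc]. *)
From Pilot Require Import Defs.
Set Implicit Arguments. Unset Strict Implicit. Unset Printing Implicit Defensive.

Section Unrolling.
Variable n : nat.
Implicit Types i j k p q : 'I_n.

Lemma cdistE i j : cdist i j = if i <= j then j - i else j + n - i.
Proof.
rewrite /cdist; have := ltn_ord i; have := ltn_ord j.
case: (leqP i j) => ij *; last by rewrite modn_small //; lia.
by rewrite (_ : j + n - i = (j - i) + n) ?modnDr ?modn_small //; lia.
Qed.

Lemma cdistxx i : cdist i i = 0.
Proof. by rewrite cdistE leqnn subnn. Qed.

Lemma cdist_lt i j : cdist i j < n.
Proof. rewrite cdistE; have := ltn_ord i; have := ltn_ord j; case: (leqP i j); lia. Qed.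

Lemma cdist_inj i j j' : cdist i j = cdist i j' -> j = j'.
Proof.
rewrite !cdistE => e; apply: ord_inj.
by move: e; have := ltn_ord i; have := ltn_ord j; have := ltn_ord j';
  case: (leqP i j); case: (leqP i j'); lia.
Qed.

Lemma ord_predE k : ord_pred k = (if 0 < k then k.-1 else n.-1) :> nat.
Proof.
rewrite /=; have := ltn_ord k; case: (posnP k) => [-> | k_gt0] lt_k.
  by rewrite add0n modn_small //; lia.
by rewrite (_ : (k + n).-1 = k.-1 + n) ?modnDr ?modn_small //; lia.
Qed.

Lemma cdist_ord_pred k : cdist k (ord_pred k) = n.-1.
Proof.
rewrite cdistE ord_predE; have := ltn_ord k.
by case: (posnP k) => [k0 | k_gt0] lt_k; rewrite ?k0 /=;
  [case: (leqP 0 n.-1) | case: (leqP k k.-1)]; lia.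
Qed.

Lemma cdist_ord_pred_r i k : k != i -> cdist i (ord_pred k) = (cdist i k).-1.
Proof.
move=> /eqP ne; have {}ne : (k : nat) <> i by move/ord_inj.
rewrite !cdistE ord_predE; have := ltn_ord i; have := ltn_ord k.
case: (posnP k) => [k0 | k_gt0] lt_k lt_i; rewrite ?k0 ?k_gt0 /=.
  by rewrite k0 in ne; case: (leqP i n.-1); case: (leqP i 0); lia.
by case: (leqP i k.-1); case: (leqP i k); lia.
Qed.

Lemma run_st_len R i j : run_st R i j -> cdist i j + 2 <= n.
Proof.
move=> [-> [_ /negP RT]]; rewrite leqNgt; apply/negP => long; apply: RT.
by apply/eqP/setP => k; rewrite !inE; have := cdist_lt i k; lia.
Qed.

Lemma run_st_inj R i j i' j' : run_st R i j -> run_st R i' j' -> i = i' /\ j = j'.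
Proof.
move=> rij ri'j'; have := run_st_len rij; have := run_st_len ri'j'.
case: rij ri'j' => [Rij _] [Ri'j' _] len' len.
have memR k : (k \in R) = (cdist i k <= cdist i j) by rewrite Rij inE.
have memR' k : (k \in R) = (cdist i' k <= cdist i' j') by rewrite Ri'j' inE.
have ii' : i = i'.
  (* Otherwise the predecessor of i', which is not in arc i' j', would be in arc i j. *)
  apply/eqP/negPn/negP => ne.
  have : ord_pred i' \in R.
    rewrite memR cdist_ord_pred_r 1?eq_sym //.
    by have := memR i'; rewrite memR' cdistxx => /esym; lia.
  by rewrite memR' cdist_ord_pred; lia.
subst i'; split => //; apply: (cdist_inj (i := i)); apply/eqP; rewrite eqn_leq.
by rewrite -memR' memR leqnn -memR memR' leqnn.
Qed.

End Unrolling.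

Section Lifts.
Variables (n : nat) (v0 : 'I_n).
Implicit Types i j p q : 'I_n.
Local Notation l := (cdist v0).

(* C unrolled three times onto [0, 3n): p sits at l p, l p + n and l p + 2n.  A run
   arc[i,j] fills the window [l i, l i + cdist i j] and its translate by n ([sh = n]). *)
Definition is_lift p (z : nat) : Prop := z = l p \/ z = l p + n \/ z = l p + n + n.

Definition in_window (s e : nat) p : Prop := exists2 z, is_lift p z & s <= z <= e.

Lemma cdist_shift i j :
  (l i <= l j /\ cdist i j = l j - l i) \/ (l j < l i /\ cdist i j = l j + n - l i).
Proof.
rewrite !cdistE; have := ltn_ord i; have := ltn_ord j; have := ltn_ord v0.
by case: (leqP v0 i); case: (leqP v0 j); case: (leqP i j); lia.
Qed.

Lemma cdist_lifts i j zi zj : is_lift i zi -> is_lift j zj -> zi <= zj < zi + n ->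
  cdist i j = zj - zi.
Proof.
rewrite /is_lift; have := cdist_shift i j; have := cdist_lt v0 i; have := cdist_lt v0 j; lia.
Qed.

Lemma cyc4_lifts p1 p2 p3 p4 z1 z2 z3 z4 :
  is_lift p1 z1 -> is_lift p2 z2 -> is_lift p3 z3 -> is_lift p4 z4 ->
  z1 < z2 -> z2 < z3 -> z3 < z4 -> z4 < z1 + n -> cyc4 p1 p2 p3 p4.
Proof.
move=> h1 h2 h3 h4 *.
by rewrite /cyc4 (cdist_lifts h1 h2) ?(cdist_lifts h1 h3) ?(cdist_lifts h1 h4); try lia.
Qed.

Lemma lift_end i j sh : sh = 0 \/ sh = n -> is_lift j (l i + cdist i j + sh).
Proof.
by move=> ?; rewrite /is_lift; have := cdist_shift i j; have := cdist_lt v0 i; lia.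
Qed.

Lemma mem_arc_window i j p sh : sh = 0 \/ sh = n ->
  p \in arc i j <-> in_window (l i + sh) (l i + cdist i j + sh) p.
Proof.
rewrite inE; have := cdist_shift i p; have := cdist_lt v0 i; have := cdist_lt v0 p.
have := cdist_lt i j => ? ? ? ? sh0n; split => [ip | [z]]; last by rewrite /is_lift; lia.
case: (leqP (l i) (l p)) => ?; [exists (l p + sh) | exists (l p + n + sh)]; rewrite /is_lift; lia.
Qed.

Lemma arc_sub_window i j i' j' sh : sh = 0 \/ sh = n ->
  l i' <= l i + sh -> l i + cdist i j + sh <= l i' + cdist i' j' -> arc i j \subset arc i' j'.
Proof.
move=> sh0n le_s le_e; apply/subsetP => p /(mem_arc_window _ _ _ sh0n) [z pz zW].
by apply/(mem_arc_window _ _ _ (or_introl erefl)); exists z; rewrite ?addn0 //; lia.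
Qed.

Lemma window_axax_pair (X Y : {set 'I_n}) s1 e1 s2 e2 s3 e3 s4 e4 :
  s1 <= s2 -> e2 <= e3 -> s3 <= s4 -> e4 <= e1 + n ->
  (exists2 p, p \in X & in_window s1 e1 p) -> (exists2 p, p \in X & in_window s3 e3 p) ->
  (exists2 q, q \in Y & in_window s2 e2 q) -> (exists2 q, q \in Y & in_window s4 e4 q) ->
  (forall q, q \in Y -> ~ in_window s1 e1 q /\ ~ in_window s3 e3 q) ->
  axax_pair X Y.
Proof.
(* q2 and q4 avoid the windows around p1 and p3, so p1 < q2 < p3 < q4 < p1 + n. *)
move=> s12 e23 s34 e41 [p1 Xp1 [z1 lz1 W1z1]] [p3 Xp3 [z3 lz3 W3z3]].
move=> [q2 Yq2 [w2 lw2 W2w2]] [q4 Yq4 [w4 lw4 W4w4]] offY.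
have off q z : q \in Y -> is_lift q z -> ~~ (s1 <= z <= e1) && ~~ (s3 <= z <= e3).
  move=> /offY [W1 W3] lz; apply/andP.
  by split; apply/negP => Wz; [apply: W1 | apply: W3]; exists z.
have Yp1 : p1 \notin Y by apply/negP => /off /(_ lz1); rewrite W1z1.
have Yp3 : p3 \notin Y by apply/negP => /off /(_ lz3); rewrite W3z3 andbF.
have := off _ _ Yq2 lw2; have := off _ _ Yq4 lw4.
have := off q4 (l q4) Yq4 (or_introl erefl).
have := off q4 (l q4 + n) Yq4 (or_intror (or_introl erefl)).
have := cdist_lt v0 q4; have := lw4; rewrite /is_lift => ? ? ? ? ? ?.
exists p1, q2, p3, q4; split; first by apply: (cyc4_lifts lz1 lw2 lz3 lw4); lia.
by rewrite !inE Xp1 Xp3 Yp1 Yp3 Yq2 Yq4.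
Qed.

Lemma run_meets_window R i j (X : {set 'I_n}) sh : run_st R i j -> sh = 0 \/ sh = n ->
  R :&: X != set0 <-> exists2 p, p \in X & in_window (l i + sh) (l i + cdist i j + sh) p.
Proof.
move=> [-> _] sh0n; split.
  by case/set0Pn => p; rewrite inE => /andP [/(mem_arc_window _ _ _ sh0n) W Xp]; exists p.
by move=> [p Xp /(mem_arc_window _ _ _ sh0n) W]; apply/set0Pn; exists p; rewrite inE W.
Qed.

Lemma run_misses_window R i j (Y : {set 'I_n}) sh q : run_st R i j -> sh = 0 \/ sh = n ->
  R :&: Y == set0 -> q \in Y -> ~ in_window (l i + sh) (l i + cdist i j + sh) q.
Proof.
move=> rR sh0n RY Yq W.
suff : R :&: Y != set0 by rewrite RY.
by apply/(run_meets_window Y rR sh0n); exists q.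
Qed.

End Lifts.

Section LexOrder.
Variables (n : nat) (v0 : 'I_n) (H : {set {set 'I_n}}).
Hypotheses (H_runs : forall R, R \in H -> is_run R) (H_sc : sc_free H).
Local Notation l := (cdist v0).

Lemma lex_le_windows R R' i j i' j' : R \in H -> R' \in H ->
  run_st R i j -> run_st R' i' j' -> lex_le v0 R R' ->
  [/\ l i <= l i', l i + cdist i j <= l i' + cdist i' j'
    & l i' + cdist i' j' <= l i + cdist i j + n].
Proof.
(* Ends out of order would make one run strictly contain the other. *)
move=> RH R'H rR rR' [i2 [j2 [i2' [j2' [rR2 [rR'2 key]]]]]].
case: (run_st_inj rR rR2) (run_st_inj rR' rR'2) => ? ? [? ?]; subst i2 j2 i2' j2'.
have lt_i := cdist_lt v0 i; have lt_i' := cdist_lt v0 i'.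
have lt_L := cdist_lt i j; have lt_L' := cdist_lt i' j'.
have lift_i : is_lift v0 i (l i) by left.
have lift_i' : is_lift v0 i' (l i') by left.
have lift_in : is_lift v0 i (l i + n) by right; left.
have lift_j' := lift_end v0 i' j' (or_introl erefl); rewrite addn0 in lift_j'.
have lift_jn := lift_end v0 i j (or_intror erefl).
have [eR _] := rR; have [eR' _] := rR'.
split; first by clear -key; lia.
- rewrite leqNgt; apply/negP => lt_e; apply: (H_sc R'H RH).
  have lt_ii' : l i < l i' by clear -key lt_e; lia.
  exists i', j', i, j; do 2 split => //; split.
    by rewrite eR eR'; apply: (arc_sub_window (v0 := v0) (sh := 0)); lia.
  rewrite (cdist_lifts lift_i lift_i') ?(cdist_lifts lift_i lift_j');
    clear -lt_e lt_ii' lt_i' lt_L; lia.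
- rewrite leqNgt; apply/negP => lt_e; apply: (H_sc RH R'H).
  have lt_ii' : l i < l i' by clear -key lt_e lt_L'; lia.
  exists i, j, i', j'; do 2 split => //; split.
    by rewrite eR eR'; apply: (arc_sub_window (v0 := v0) (sh := n)); lia.
  rewrite (cdist_lifts lift_i' lift_in) ?(cdist_lifts lift_i' lift_jn);
    clear -lt_e lt_ii' lt_i lt_i' lt_L'; lia.
Qed.

Let sh0 : 0 = 0 \/ 0 = n. Proof. by left. Qed.
Let shn : n = 0 \/ n = n. Proof. by right. Qed.

Section FourRuns.
Variables (R1 R2 R3 R4 : {set 'I_n}) (X Y : {set 'I_n}).
Hypotheses (H1 : R1 \in H) (H2 : R2 \in H) (H3 : R3 \in H) (H4 : R4 \in H).
Hypotheses (lex12 : lex_le v0 R1 R2) (lex23 : lex_le v0 R2 R3) (lex34 : lex_le v0 R3 R4)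
  (lex14 : lex_le v0 R1 R4).

Lemma lex_runs_axax_pair :
  R1 :&: X != set0 -> R3 :&: X != set0 -> R1 :&: Y == set0 -> R3 :&: Y == set0 ->
  R2 :&: Y != set0 -> R4 :&: Y != set0 -> axax_pair X Y.
Proof.
move=> X1 X3 Y1 Y3 Y2 Y4.
have [i1 [j1 r1]] := H_runs H1; have [i2 [j2 r2]] := H_runs H2.
have [i3 [j3 r3]] := H_runs H3; have [i4 [j4 r4]] := H_runs H4.
have [s12 _ _] := lex_le_windows H1 H2 r1 r2 lex12.
have [_ e23 _] := lex_le_windows H2 H3 r2 r3 lex23.
have [s34 _ _] := lex_le_windows H3 H4 r3 r4 lex34.
have [_ _ e41] := lex_le_windows H1 H4 r1 r4 lex14.
apply: (window_axax_pair _ _ _ _ (proj1 (run_meets_window v0 X r1 sh0) X1)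
  (proj1 (run_meets_window v0 X r3 sh0) X3) (proj1 (run_meets_window v0 Y r2 sh0) Y2)
  (proj1 (run_meets_window v0 Y r4 sh0) Y4)); last first.
- by move=> q Yq; split; [exact: (run_misses_window r1 sh0 Y1 Yq) |
    exact: (run_misses_window r3 sh0 Y3 Yq)].
all: by rewrite ?addn0.
Qed.

(* The window of R1, moved up by n, comes after that of R4. *)
Lemma lex_runs_axax_pair_shifted :
  R2 :&: X != set0 -> R4 :&: X != set0 -> R2 :&: Y == set0 -> R4 :&: Y == set0 ->
  R1 :&: Y != set0 -> R3 :&: Y != set0 -> axax_pair X Y.
Proof.
move=> X2 X4 Y2 Y4 Y1 Y3.
have [i1 [j1 r1]] := H_runs H1; have [i2 [j2 r2]] := H_runs H2.
have [i3 [j3 r3]] := H_runs H3; have [i4 [j4 r4]] := H_runs H4.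
have [_ e12 _] := lex_le_windows H1 H2 r1 r2 lex12.
have [s23 _ _] := lex_le_windows H2 H3 r2 r3 lex23.
have [_ e34 _] := lex_le_windows H3 H4 r3 r4 lex34.
apply: (window_axax_pair _ _ _ _ (proj1 (run_meets_window v0 X r2 sh0) X2)
  (proj1 (run_meets_window v0 X r4 sh0) X4) (proj1 (run_meets_window v0 Y r3 sh0) Y3)
  (proj1 (run_meets_window v0 Y r1 shn) Y1)); last first.
- by move=> q Yq; split; [exact: (run_misses_window r2 sh0 Y2 Yq) |
    exact: (run_misses_window r4 sh0 Y4 Yq)].
all: rewrite ?addn0 ?leq_add2r //.
by rewrite ltnW // (leq_trans (cdist_lt v0 i4)) ?leq_addl.
Qed.

End FourRuns.

End LexOrder.

Section Outerplanar.
Variable m : nat.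
Implicit Types (a b c d u v w x y z : 'I_m) (A B P Q S : {set 'I_m}) (E : rel 'I_m).

Definition interleaved A B : Prop :=
  exists a b c d, [/\ [&& a < b, b < c & c < d], a \in A, c \in A, b \in B & d \in B].

Definition alternate A B : Prop := interleaved A B \/ interleaved B A.

Definition induced E A : rel 'I_m := [rel u v | [&& E u v, u \in A & v \in A]].

(* Consecutive elements of P, or its minimum and maximum: the edges of the cycle through P
   in increasing order. *)
Definition boundary_pair P x y : Prop :=
  x < y /\ ((forall z, z \in P -> ~~ (x < z < y)) \/ (forall z, z \in P -> x <= z <= y)).

Definition outerplanar_on P E : Prop :=
  [/\ forall x y, E x y -> E y x,
      forall x y, E x y -> [&& x \in P, y \in P & x != y],
      forall x y, x \in P -> y \in P -> boundary_pair P x y -> E x y &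
      forall a b c d, a < b -> b < c -> c < d -> ~~ (E a c && E b d)].

Definition inner a b : {set 'I_m} := [set x : 'I_m | a <= x <= b].
Definition outer a b : {set 'I_m} := [set x : 'I_m | (x <= a) || (b <= x)].

Definition crosses P a b S : Prop :=
  [/\ a \notin S, b \notin S & exists x z,
    [/\ x \in S :&: P, z \in S :&: P, a < x < b & (z < a) || (b < z)]].

Lemma outerplanar_glue P a b E1 E2 : a \in P -> b \in P -> a < b ->
  outerplanar_on (P :&: inner a b) E1 -> outerplanar_on (P :&: outer a b) E2 ->
  outerplanar_on P (relU E1 E2).
Proof.
move=> aP bP ab [sym1 in1 bd1 nc1] [sym2 in2 bd2 nc2]; split.
- by move=> x y /orP [/sym1 | /sym2] /= ->; rewrite ?orbT.
- by move=> x y /orP [/in1 | /in2]; rewrite !in_setI => /and3P [/andP [-> _] /andP [-> _] ->].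
- move=> x y xP yP [xy [consec | extreme]] /=.
    have /negP outa := consec a aP; have /negP outb := consec b bP.
    have bp Q : boundary_pair (P :&: Q) x y.
      by split=> //; left=> z /setIP [zP _]; apply: consec.
    case: (boolP ((a <= x) && (y <= b))) => xyab; apply/orP;
      [left; apply: (bd1 _ _ _ _ (bp _)) | right; apply: (bd2 _ _ _ _ (bp _))];
      rewrite in_setI inE ?xP ?yP /=; lia.
  have := extreme a aP; have := extreme b bP => ab_in ba_in.
  apply/orP; right; apply: bd2; rewrite ?in_setI ?inE ?xP ?yP /=; try lia.
  by split=> //; right=> z /setIP [zP _]; apply: extreme.
- move=> x y z w xy yz zw; apply/negP => /andP [/orP [e1 | e2] /orP [f1 | f2]].
  + by move/negP: (nc1 _ _ _ _ xy yz zw); apply; rewrite e1 f1.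
  + move: (in1 _ _ e1) (in2 _ _ f2); rewrite !in_setI !inE.
    case/and3P => /andP [_ ax] /andP [_ zb] _ /and3P [/andP [_ yout] _ _].
    by clear -ax zb yout xy yz; lia.
  + move: (in2 _ _ e2) (in1 _ _ f1); rewrite !in_setI !inE.
    case/and3P => _ /andP [_ zout] _ /and3P [/andP [_ ay] /andP [_ wb] _].
    by clear -ay wb zout yz zw; lia.
  + by move/negP: (nc2 _ _ _ _ xy yz zw); apply; rewrite e2 f2.
Qed.

Lemma connect_induced_mono E E' A A' x y : subrel E E' -> A \subset A' ->
  connect (induced E A) x y -> connect (induced E' A') x y.
Proof.
move=> EE' AA'; apply: connect_sub => u v /and3P [e uA vA]; apply: connect1.
by rewrite /induced /= EE' // (subsetP AA' _ uA) (subsetP AA' _ vA).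
Qed.

Variable F : {set {set 'I_m}}.

Definition traces_connected P E : Prop :=
  forall S, S \in F -> {in S :&: P &, forall x y, connect (induced E (S :&: P)) x y}.

Lemma traces_connected_glue P a b E1 E2 : a \in P -> b \in P ->
  (forall S, S \in F -> ~ crosses P a b S) ->
  traces_connected (P :&: inner a b) E1 -> traces_connected (P :&: outer a b) E2 ->
  traces_connected P (relU E1 E2).
Proof.
move=> aP bP uncrossed conn1 conn2 S SF x y.
have subS Q : S :&: (P :&: Q) \subset S :&: P by apply/setIS/subsetIl.
have path1 u v : u \in S :&: (P :&: inner a b) -> v \in S :&: (P :&: inner a b) ->
    connect (induced (relU E1 E2) (S :&: P)) u v.
  by move=> uS vS; apply: connect_induced_mono (conn1 S SF u v uS vS) => // ? ? /= ->.
have path2 u v : u \in S :&: (P :&: outer a b) -> v \in S :&: (P :&: outer a b) ->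
    connect (induced (relU E1 E2) (S :&: P)) u v.
  by move=> uS vS; apply: connect_induced_mono (conn2 S SF u v uS vS) => // ? ? /= ->; rewrite orbT.
have hub u v : u \in S :&: P -> v \in S :&: P -> a <= u <= b -> ~~ (a <= v <= b) ->
    exists2 c, c \in S :&: (P :&: inner a b) & c \in S :&: (P :&: outer a b).
  move=> uSP vSP uin vout; case: (boolP (a \in S)) => aS.
    by exists a; rewrite !inE aS aP /= ?leqnn ?orTb //; lia.
  case: (boolP (b \in S)) => bS.
    by exists b; rewrite !inE bS bP /= ?leqnn ?orbT //; lia.
  case: (uncrossed S SF); split => //; exists u, v; split => //; last by lia.
  move: uSP; rewrite inE => /andP [uS _].
  have ua : (u : nat) <> a by move/ord_inj => ua; rewrite -ua uS in aS.
  have ub : (u : nat) <> b by move/ord_inj => ub; rewrite -ub uS in bS.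
  lia.
have in1 u : u \in S :&: P -> a <= u <= b -> u \in S :&: (P :&: inner a b).
  by rewrite !inE => /andP [-> ->].
have in2 u : u \in S :&: P -> ~~ (a <= u <= b) -> u \in S :&: (P :&: outer a b).
  by rewrite !inE => /andP [-> ->] /=; lia.
move=> xSP ySP; case: (boolP (a <= x <= b)) => xin; case: (boolP (a <= y <= b)) => yin.
- exact: path1 (in1 _ xSP xin) (in1 _ ySP yin).
- have [c c1 c2] := hub x y xSP ySP xin yin.
  exact: connect_trans (path1 _ _ (in1 _ xSP xin) c1) (path2 _ _ c2 (in2 _ ySP yin)).
- have [c c1 c2] := hub y x ySP xSP yin xin.
  exact: connect_trans (path2 _ _ (in2 _ xSP xin) c2) (path1 _ _ c1 (in1 _ ySP yin)).
- exact: path2 (in2 _ xSP xin) (in2 _ ySP yin).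
Qed.

Hypothesis F_free : forall S S', S \in F -> S' \in F -> ~ alternate (S :\: S') S'.

Lemma trace_chord_uncrossed P S a b : S \in F -> a \in S -> b \in S ->
  forall S', S' \in F -> ~ crosses P a b S'.
Proof.
move=> SF aS bS S' S'F [aS' bS' [x [z [/setIP [xS' _] /setIP [zS' _] axb zout]]]].
have aD : a \in S :\: S' by rewrite inE aS' aS.
have bD : b \in S :\: S' by rewrite inE bS' bS.
apply: (F_free SF S'F); case/orP: zout => [za | bz].
  by right; exists z, a, x, b; split => //; rewrite za.
by left; exists a, x, b, z; split => //; rewrite bz andbT.
Qed.

Lemma outerplanar_small P : #|P| <= 3 -> exists E, outerplanar_on P E /\ traces_connected P E.
Proof.
move=> P3; pose E := [rel x y | [&& x \in P, y \in P & x != y]].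
have ltn_neq x y : x < y -> x != y by move=> xy; apply/eqP => yx; rewrite yx ltnn in xy.
exists E; split; first split.
- by move=> x y /and3P [xP yP xy]; rewrite /= xP yP eq_sym.
- by [].
- by move=> x y xP yP [xy _]; rewrite /= xP yP ltn_neq.
- move=> a b c d ab bc cd; apply/negP => /andP [/and3P [aP cP _] /and3P [bP dP _]].
  suff : 4 <= #|P| by lia.
  rewrite cardE; apply: (@uniq_leq_size _ [:: a; b; c; d]); last first.
    by move=> x; rewrite !inE => /or4P [] /eqP ->; rewrite mem_enum.
  by rewrite /= !inE !negb_or -!val_eqE /=; lia.
- move=> S _ x y /setIP [xS xP] /setIP [yS yP]; case: (eqVneq x y) => [-> | xy].
    exact: connect0.
  by apply: connect1; rewrite /induced /= xP yP xy !inE xS xP yS yP.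
Qed.

Lemma ex_minset P x : x \in P -> exists2 p, p \in P & forall y, y \in P -> p <= y.
Proof.
move=> xP; case: (@arg_minnP _ x (fun y => y \in P) (fun y : 'I_m => nat_of_ord y) xP) => p.
by exists p.
Qed.

Lemma three_smallest P : 3 < #|P| -> exists p0 p1 p2 p3 : 'I_m,
  [/\ [&& p0 < p1, p1 < p2 & p2 < p3], [&& p0 \in P, p1 \in P, p2 \in P & p3 \in P],
      forall x, x \in P -> p0 <= x & forall x, x \in P -> p0 < x < p2 -> x = p1].
Proof.
move=> P4; have [x0 x0P] := elimT card_gt0P (ltnW (ltnW (ltnW P4))).
have [p0 p0P min0] := ex_minset x0P.
move: P4; rewrite (cardsD1 p0) p0P => P4.
have [x1 x1P] := elimT card_gt0P (ltnW (ltnW P4)).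
have [p1 p1P min1] := ex_minset x1P.
move: P4; rewrite (cardsD1 p1) p1P => P4.
have [x2 x2P] := elimT card_gt0P (ltnW P4).
have [p2 p2P min2] := ex_minset x2P.
move: P4; rewrite (cardsD1 p2) p2P => P4.
have [p3 p3P] := elimT card_gt0P P4.
move: p1P p2P p3P; rewrite !inE => /andP [n10 p1P] /and3P [n21 n20 p2P] /and4P [n32 n31 n30 p3P].
have le01 := min0 _ p1P.
have le12 : p1 <= p2 by apply: min1; rewrite !inE n20 p2P.
have le23 : p2 <= p3 by apply: min2; rewrite !inE n31 n30 p3P.
have lt_of x y : x <= y -> y != x -> x < y by rewrite ltn_neqAle eq_sym => -> ->.
exists p0, p1, p2, p3; split; rewrite ?p0P ?p1P ?p2P ?p3P //.
  by rewrite !lt_of.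
move=> x xP x02; have xp0 : x != p0 by apply/eqP => xp0; rewrite xp0 ltnn in x02.
apply/eqP; apply: contraTT x02 => nx1.
have := min2 x; rewrite !inE nx1 xp0 xP => /(_ isT) le2x.
by rewrite [x < p2]ltnNge le2x andbF.
Qed.

Lemma card_setI_lt P Q w : w \in P -> w \notin Q -> #|P :&: Q| < #|P|.
Proof.
move=> wP wQ; apply: proper_card; apply/properP; split; first exact: subsetIl.
by exists w; rewrite // inE (negbTE wQ) andbF.
Qed.

Lemma outerplanar_exists P : exists E, outerplanar_on P E /\ traces_connected P E.
Proof.
have [k] := ubnP #|P|; elim: k P => // k IH P /ltnSE leP.
case: (leqP #|P| 3) => [small | big]; first exact: outerplanar_small.
have chord a b w w' : a \in P -> b \in P -> w \in P -> a < w < b ->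
    w' \in P -> (w' < a) || (b < w') -> (forall S, S \in F -> ~ crosses P a b S) ->
    exists E, outerplanar_on P E /\ traces_connected P E.
  move=> aP bP wP awb w'P w'out uncrossed.
  have [|E1 [op1 conn1]] := IH (P :&: inner a b).
    by apply: leq_trans leP; apply: (card_setI_lt w'P); rewrite inE; lia.
  have [|E2 [op2 conn2]] := IH (P :&: outer a b).
    by apply: leq_trans leP; apply: (card_setI_lt wP); rewrite inE; lia.
  exists (relU E1 E2); split.
    by apply: (outerplanar_glue aP bP _ op1 op2); lia.
  exact: (traces_connected_glue aP bP uncrossed conn1 conn2).
have [p0 [p1 [p2 [p3 [/and3P [lt01 lt12 lt23] /and4P [p0P p1P p2P p3P] min0 between]]]]] :=
  three_smallest big.
(* A chord inside a trace is uncrossed; p0 p2 can only be crossed by a trace through p1. *)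
case: (boolP [exists S in F, [exists v in S :&: P, (p1 \in S) && (p2 < v)]]).
  case/exists_inP => S SF /exists_inP [v /setIP [vS vP] /andP [p1S p2v]].
  apply: (chord p1 v p2 p0 p1P vP p2P _ p0P _ (trace_chord_uncrossed SF p1S vS)).
    by rewrite lt12 p2v.
  by rewrite lt01.
move=> noblocker; apply: (chord p0 p2 p1 p3 p0P p2P p1P _ p3P); first by rewrite lt01 lt12.
  by rewrite lt23 orbT.
move=> S SF [p0S p2S [x [z [/setIP [xS xP] /setIP [zS zP] p0xp2 zout]]]].
move/negP: noblocker; apply; apply/exists_inP; exists S => //; apply/exists_inP; exists z.
  by rewrite inE zS.
rewrite -(between x xP p0xp2) xS /=; move: zout; rewrite ltnNge min0 //=.
Qed.

End Outerplanar.

Lemma connect_homo (T T' : finType) (e : rel T) (e' : rel T') (f : T -> T') :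
  {homo f : x y / e x y >-> e' x y} -> {homo f : x y / connect e x y >-> connect e' x y}.
Proof.
move=> fe x _ /connectP [p ep ->]; apply/connectP; exists (map f p).
  exact: homo_path ep.
by rewrite last_map.
Qed.

Section Transport.
Variables (n : nat) (hs : seq {set 'I_n}).
Hypothesis hs_uniq : uniq hs.
Local Notation m := (size hs).
Implicit Types (H : {set {set 'I_n}}) (R X : {set 'I_n}).

Definition trace (X : {set 'I_n}) : {set 'I_m} := [set i : 'I_m | nth set0 hs i :&: X != set0].

Lemma nth_hs_inj : injective (fun i : 'I_m => nth set0 hs i).
Proof. by move=> i j /eqP; rewrite nth_uniq // => /eqP /ord_inj. Qed.

Lemma mem_hs_nth R : R \in hs -> exists i : 'I_m, R = nth set0 hs i.
Proof. by move=> Rhs; exists (Ordinal (etrans (index_mem R hs) Rhs)); rewrite nth_index. Qed.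

Variable E : rel 'I_m.

Definition transport : rel {set 'I_n} := fun R R' =>
  [exists i : 'I_m, exists j : 'I_m, [&& nth set0 hs i == R, nth set0 hs j == R' & E i j]].

Lemma transportE (i j : 'I_m) : transport (nth set0 hs i) (nth set0 hs j) = E i j.
Proof.
apply/existsP/idP => [[i' /existsP [j' /and3P [/eqP /nth_hs_inj <- /eqP /nth_hs_inj <- //]]] | Eij].
by exists i; apply/existsP; exists j; rewrite !eqxx.
Qed.

Lemma transportP R R' : transport R R' ->
  exists i j : 'I_m, [/\ R = nth set0 hs i, R' = nth set0 hs j & E i j].
Proof. by case/existsP => i /existsP [j /and3P [/eqP <- /eqP <- Eij]]; exists i, j. Qed.

Hypothesis E_outerplanar : outerplanar_on [set: 'I_m] E.

Lemma transport_graph_on H : (forall R, (R \in hs) = (R \in H)) -> graph_on H transport.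
Proof.
case: E_outerplanar => E_sym E_loopless _ _ mem_hs; split; [|split].
- move=> R R' /transportP [i [j [-> -> Eij]]]; rewrite transportE; exact: E_sym.
- move=> R; apply/negP => /transportP [i [j [-> /nth_hs_inj <- Eii]]].
  by have := E_loopless _ _ Eii; rewrite eqxx !andbF.
- by move=> R R' /transportP [i [j [-> -> _]]]; rewrite -!mem_hs !mem_nth.
Qed.

Lemma transport_contains_cycle : 1 < m -> contains_cycle transport hs.
Proof.
case: E_outerplanar => E_sym _ E_boundary _ m_gt1 a lt_am.
case: (ltnP a.+1 m) => [lt_a1m | le_ma1].
  rewrite modn_small // (transportE (Ordinal lt_am) (Ordinal lt_a1m)).
  by apply: E_boundary; rewrite ?inE //; split => //=; left => z _; apply/negP; lia.
have -> : a.+1 %% m = 0 by rewrite (_ : a.+1 = m) ?modnn //; lia.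
have m_gt0 : 0 < m by lia.
rewrite (transportE (Ordinal lt_am) (Ordinal m_gt0)); apply: E_sym.
apply: E_boundary; rewrite ?inE //; split => /=; first lia.
by right => z _; have := ltn_ord z; lia.
Qed.

Lemma transport_outerplanar : outerplanar_wrt transport hs.
Proof.
case: E_outerplanar => _ _ _ E_noncross a b c d ab bc cd lt_dm.
have lt_cm : c < m by lia.
have lt_bm : b < m by lia.
have lt_am : a < m by lia.
rewrite (transportE (Ordinal lt_am) (Ordinal lt_cm)) (transportE (Ordinal lt_bm) (Ordinal lt_dm)).
by move=> /andP; apply/negP; apply: E_noncross.
Qed.

Lemma transport_connected H X : (forall R, (R \in hs) = (R \in H)) ->
  {in trace X &, forall i j, connect (induced E (trace X)) i j} ->
  induces_connected transport [set R in H | R :&: X != set0].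
Proof.
move=> mem_hs conn R R'; rewrite !inE -!mem_hs.
move=> /andP [/mem_hs_nth [i ->] RX] /andP [/mem_hs_nth [j ->] R'X].
have : connect (induced E (trace X)) i j by apply: conn; rewrite inE.
apply: (connect_homo (f := fun k : 'I_m => nth set0 hs k)) => u v /and3P [Euv uX vX].
rewrite /= transportE Euv !inE -!mem_hs !mem_nth //.
by move: uX vX; rewrite !inE => -> ->.
Qed.

End Transport.

Section Traces.
Variables (n : nat) (v0 : 'I_n) (H K : {set {set 'I_n}}) (hs : seq {set 'I_n}).
Hypotheses (H_runs : forall R, R \in H -> is_run R) (H_sc : sc_free H) (K_free : axax_free K).
Hypotheses (mem_hs : forall R, (R \in hs) = (R \in H))
  (lex_hs : forall a b, a < b < size hs -> lex_le v0 (nth set0 hs a) (nth set0 hs b)).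

Lemma trace_not_alternate X Y : X \in K -> Y \in K ->
  ~ alternate (trace hs X :\: trace hs Y) (trace hs Y).
Proof.
have hsH (i : 'I_(size hs)) : nth set0 hs i \in H by rewrite -mem_hs mem_nth.
have lex (i j : 'I_(size hs)) : i < j -> lex_le v0 (nth set0 hs i) (nth set0 hs j).
  by move=> ij; apply: lex_hs; rewrite ij /=.
move=> XK YK [] [a [b [c [d [/and3P [ab bc cd] aA cA bB dB]]]]]; apply: (K_free XK YK).
  move: aA cA bB dB; rewrite !inE !negbK => /andP [aY aX] /andP [cY cX] bY dY.
  exact: (lex_runs_axax_pair H_runs H_sc (hsH a) (hsH b) (hsH c) (hsH d) (lex _ _ ab) (lex _ _ bc)
    (lex _ _ cd) (lex _ _ (ltn_trans ab (ltn_trans bc cd))) aX cX aY cY bY dY).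
move: aA cA bB dB; rewrite !inE !negbK => aY cY /andP [bY bX] /andP [dY dX].
exact: (lex_runs_axax_pair_shifted H_runs H_sc (hsH a) (hsH b) (hsH c) (hsH d) (lex _ _ ab)
  (lex _ _ bc) (lex _ _ cd) bX dX bY dY aY cY).
Qed.

End Traces.

Theorem mainTheorem15 (n : nat) (H K : {set {set 'I_n}}) :
  2 < #|H| ->
  (forall R, R \in H -> is_run R) ->
  sc_free H ->
  axax_free H -> axax_free K ->
  forall (v0 : 'I_n) (hs : seq {set 'I_n}), lex_cyclic_enum H v0 hs ->
  exists Q : rel {set 'I_n},
    [/\ graph_on H Q, contains_cycle Q hs, outerplanar_wrt Q hs &
        forall X, X \in K -> induces_connected Q [set R in H | R :&: X != set0]].
Proof.
move=> H3 H_runs H_sc _ K_free v0 hs [hs_uniq [mem_hs lex_hs]].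
have size_hs : #|H| = size hs.
  by rewrite -(card_uniqP hs_uniq); apply: eq_card => R; rewrite mem_hs.
pose F := [set trace hs X | X in K].
have F_free S S' : S \in F -> S' \in F -> ~ alternate (S :\: S') S'.
  move=> /imsetP [X XK ->] /imsetP [Y YK ->].
  exact: (trace_not_alternate H_runs H_sc K_free mem_hs lex_hs XK YK).
have [E [E_outerplanar E_traces]] := outerplanar_exists F_free [set: 'I_(size hs)].
exists (transport E); split.
- exact: transport_graph_on.
- by apply: transport_contains_cycle => //; rewrite -size_hs ltnW.
- exact: transport_outerplanar.
- move=> X XK; apply: transport_connected => //.
  by have := E_traces _ (imset_f (trace hs) XK); rewrite setIT.
Qed.
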